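(* Let $p$ be an odd prime, $e\ge1$, $s\in\mathbb{F}_p^*$, $a\in\mathbb{F}_p$ and $b\in\mathbb{F}_{p^e}$. Let $f\in\mathcal{RF}$ with $\varepsilon\in\{\pm1\}$ the sign of its Walsh transform and $f^*$ its dual. Let $N_s$ be the number of $x\in\mathbb{F}_{p^e}$ with $af(x)+\mathrm{Tr}_{p^e/p}(bx)=s$. If $e$ is even, then $N_s=0$ if $a=0,b=0$; $N_s=p^{e-1}$ if $a=0,b\ne0$; $N_s=p^{e-1}+\frac{\varepsilon(p-1)\sqrt{p^*}^e}{p}$ if $a\ne0$ and $f^*(-b/a)=a^{-1}s$; and $N_s=p^{e-1}-\frac{\varepsilon\sqrt{p^*}^e}{p}$ if $a\ne0$ and $f^*(-b/a)\ne a^{-1}s$. If $e$ is odd, then $N_s=0$ if $a=0,b=0$; $N_s=p^{e-1}$ if $a=0,b\ne0$, or if $a\ne0$ and $f^*(-b/a)=a^{-1}s$; $N_s=p^{e-1}+\frac{\varepsilon\sqrt{p^*}^eG(\eta_0,\lambda_1)}{p}$ if $a\ne0$, $f^*(-b/a)\ne a^{-1}s$ and $\eta_0(f^*(-b/a)-a^{-1}s)=1$; and $N_s=p^{e-1}-\frac{\varepsilon\sqrt{p^*}^eG(\eta_0,\lambda_1)}{p}$ if $a\ne0$, $f^*(-b/a)\ne a^{-1}s$ and $\eta_0(f^*(-b/a)-a^{-1}s)=-1$.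
   Context: $\zeta_p=e^{2\pi i/p}$; $\mathrm{Tr}_{p^e/p}$ is the trace map; $p^*=(-1)^{(p-1)/2}p$ with $\sqrt{p^*}=\sqrt p$ if $p\equiv1\pmod4$ and $\sqrt{-1}\sqrt p$ otherwise; $\eta_0$ is the quadratic character of $\mathbb{F}_p$, $\lambda_1(y)=\zeta_p^y$, and $G(\eta_0,\lambda_1)=\sum_{y\in\mathbb{F}_p^*}\eta_0(y)\zeta_p^y=\sqrt{-1}^{((p-1)/2)^2}\sqrt p$. A function $f:\mathbb{F}_{p^e}\to\mathbb{F}_p$ is weakly regular bent with sign $\varepsilon\in\{\pm1\}$ and dual $f^*:\mathbb{F}_{p^e}\to\mathbb{F}_p$ if $\sum_{x}\zeta_p^{f(x)-\mathrm{Tr}_{p^e/p}(\beta x)}=\varepsilon\sqrt{p^*}^e\zeta_p^{f^*(\beta)}$ for all $\beta\in\mathbb{F}_{p^e}$. $\mathcal{RF}$ is the set of weakly regular bent $f$ with $f(0)=0$ and $f(ax)=a^hf(x)$ for all $a\in\mathbb{F}_p^*$, $x\in\mathbb{F}_{p^e}$, for some positive even integer $h$ with $\gcd(h-1,p-1)=1$. *)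

From mathcomp Require Import all_boot all_order all_algebra all_field.
Import Order.TTheory GRing.Theory Num.Theory Num.Def.
Local Open Scope ring_scope.

(* zeta p = e^{2 pi i / p}: p.-root (-1) is the root of -1 of minimal
   nonnegative argument, i.e. e^{i pi / p}; its square is e^{2 pi i / p}. *)
Definition zeta (p : nat) : algC := (nthroot p (-1)) ^+ 2.

Definition chi (p : nat) (y : 'F_p) : algC := zeta p ^+ (nat_of_ord y).

(* square root of p-star := (-1)^((p-1)/2) p *)
Definition sqrtps (p : nat) : algC :=
  if (p %% 4 == 1)%N then sqrtC p%:R else Num.imaginary * sqrtC p%:R.

Definition emb (p : nat) (F : fieldType) (y : 'F_p) : F := (nat_of_ord y)%:R.

Definition Tr (p e : nat) (F : finFieldType) (x : F) : 'F_p :=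
  odflt 0 [pick y : 'F_p | emb p F y == \sum_(i < e) x ^+ (p ^ i)].

Definition eta0 (p : nat) (y : 'F_p) : algC :=
  if y == 0 then 0 else if [exists z : 'F_p, z ^+ 2 == y] then 1 else -1.

Definition gauss (p : nat) : algC :=
  \sum_(y : 'F_p | y != 0) eta0 p y * chi p y.

Definition wrbent (p e : nat) (F : finFieldType) (f : F -> 'F_p)
    (eps : int) (fstar : F -> 'F_p) : Prop :=
  (eps = 1 \/ eps = -1) /\
  forall beta : F,
    \sum_(x : F) chi p (f x - Tr p e F (beta * x))
      = eps%:~R * sqrtps p ^+ e * chi p (fstar beta).

Definition inRF (p e : nat) (F : finFieldType) (f : F -> 'F_p) : Prop :=
  [/\ exists eps fstar, wrbent p e F f eps fstar,
      f 0 = 0 &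
      exists h : nat, [/\ (0 < h)%N, ~~ odd h, coprime h.-1 p.-1 &
         forall (a : 'F_p) (x : F), a != 0 -> f (emb p F a * x) = a ^+ h * f x]].

Definition Ncount (p e : nat) (F : finFieldType) (f : F -> 'F_p)
    (a s : 'F_p) (b : F) : nat :=
  #|[set x : F | a * f x + Tr p e F (b * x) == s]|.

(* Put beta = -b/a and n_j = #{x | f(x) - Tr(beta x) = j}, so that
   N_s = n_(s/a) and, writing S = sqrtps p and c = fstar beta, bentness reads
     sum_j n_j zeta^j = eps S^e zeta^c.
   As zeta has degree p - 1 over Q, an integer combination sum_j m_j zeta^j
   vanishes only if all m_j are equal.  Hence, once the right-hand side is
   written as sum_j w_j zeta^j with integers w_j, we get n_j = A + w_j, and
   A is fixed by sum_j n_j = p^e.  For e even, S^e = (eta0(-1) p)^(e/2) is an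
   integer and w_j = eps S^e [j = c].  For e odd, S = +-G since both square
   to eta0(-1) p, and G zeta^c = sum_j eta0(j - c) zeta^j, so that
   w_j = eps (S^e / G) eta0(j - c); then G^2 = eta0(-1) p gives the stated
   form.  For a = 0 the same argument applies to x |-> Tr(b x), whose
   character sum vanishes. *)

From mathcomp Require Import all_boot all_order all_algebra all_field zify ring.
Import Order.TTheory GRing.Theory Num.Theory.
Local Open Scope ring_scope.

Set Implicit Arguments.
Unset Strict Implicit.
Unset Printing Implicit Defensive.

Section AdditiveCharacter.

Variable p : nat.
Hypothesis p_pr : prime p.

Lemma zeta_prim_root : p.-primitive_root (zeta p).
Proof.
have p_gt1 := prime_gt1 p_pr; have p_gt0 := ltnW p_gt1.
have zeta_p : zeta p ^+ p = 1.
  by rewrite /zeta -exprM mulnC exprM rootCK // sqrrN expr1n.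
have [m m_prim m_dvd] := prim_order_exists p_gt0 zeta_p.
suff m_neq1 : m != 1%N.
  by move: m_prim; rewrite (elimT (prime_nt_dvdP p_pr m_neq1) m_dvd).
apply/eqP => m1; move: m_prim; rewrite m1 => /prim_expr_order.
rewrite expr1 /zeta.
set r := nthroot p (-1); have r_p : r ^+ p = -1 by rewrite rootCK.
move=> /eqP; rewrite sqrf_eq1 => /orP[] /eqP r_eq.
  move/eqP: r_p; rewrite r_eq expr1n -subr_eq0 opprK -mulr2n mulrn_eq0.
  by rewrite oner_eq0.
by have := rootC_lt0 (-1 : algC) p_gt1; rewrite -/r r_eq ltrN10.
Qed.

Lemma ltn_val_Fp (y : 'F_p) : (y < p)%N.
Proof. by apply: leq_trans (ltn_ord y) _; rewrite Fp_cast. Qed.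

Lemma chiD (y z : 'F_p) : chi p (y + z) = chi p y * chi p z.
Proof.
have val_add : val (y + z) = ((val y + val z) %% p)%N.
  by rewrite /=; congr (_ %% _)%N; apply: Fp_cast.
by rewrite /chi val_add -exprD (expr_mod _ (prim_expr_order zeta_prim_root)).
Qed.

Lemma chi0 : chi p 0 = 1.
Proof. exact: expr0. Qed.

Lemma chi_eq1 (y : 'F_p) : (chi p y == 1) = (y == 0).
Proof.
rewrite /chi -(prim_order_dvd zeta_prim_root); apply/idP/eqP => [p_dvd|-> //].
apply: val_inj => /=; apply/eqP; apply: contraTT (ltn_val_Fp y) => y_neq0.
by rewrite -leqNgt dvdn_leq // lt0n.
Qed.

Lemma sum_chi_additive (V : finZmodType) (L : V -> 'F_p) (x0 : V) :
  {morph L : x y / x + y} -> L x0 != 0 -> \sum_x chi p (L x) = 0.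
Proof.
move=> LD Lx0; set S := \sum_x _.
have S_chi : S = S * chi p (L x0).
  rewrite /S mulr_suml (reindex_inj (addIr x0)) /=.
  by apply: eq_bigr => x _; rewrite LD chiD.
have /eqP : S * (1 - chi p (L x0)) = 0 by rewrite mulrBr mulr1 -S_chi subrr.
by rewrite mulf_eq0 subr_eq0 [1 == _]eq_sym chi_eq1 (negbTE Lx0) orbF => /eqP.
Qed.

Lemma sum_chi : \sum_(y : 'F_p) chi p y = 0.
Proof. by apply: (@sum_chi_additive _ id 1) => //; rewrite oner_eq0. Qed.

Lemma rat_poly_root_zeta_eq0 (Q : {poly rat}) :
  (size Q < p)%N -> root (map_poly ratr Q) (zeta p) -> Q = 0.
Proof.
move=> size_Q Q_zeta; have [P [minP _] minP_dvd] := minCpolyP (zeta p).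
have size_P : size P = p.
  rewrite -(size_map_poly (ratr : rat -> algC)) -minP.
  rewrite (minCpoly_cyclotomic zeta_prim_root) size_cyclotomic totient_prime //.
  by rewrite prednK // prime_gt0.
apply/eqP; apply: contraTT size_Q => Q_neq0; rewrite -leqNgt -size_P.
by apply: dvdp_leq Q_neq0 _; rewrite -minP_dvd.
Qed.

(* zeta has degree p - 1 over Q, so up to scaling the only rational relation
   among zeta^0, ..., zeta^(p-1) is sum_chi. *)
Lemma chi_int_relation (u : 'F_p -> algC) :
  (forall j, u j \is a Num.int) -> \sum_j u j * chi p j = 0 ->
  forall j k, u j = u k.
Proof.
move=> u_int u_chi; pose r : 'F_p := (p.-1)%:R.
have val_r : nat_of_ord r = p.-1.
  by rewrite val_Fp_nat // modn_small // prednK // prime_gt0.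
suff u_r j : u j = u r by move=> j k; rewrite !u_r.
pose c j : rat := (Num.floor (u j - u r))%:~R.
have ratr_c i : ratr (c i) = u i - u r by rewrite rmorph_int floorK ?rpredB.
pose Q : {poly rat} := \sum_j c j *: 'X^j.
have coef_Q k : Q`_k = \sum_(i : 'F_p | i == k :> nat) c i.
  by rewrite coef_sumMXn.
suff Q_eq0 : Q = 0.
  apply/eqP; rewrite -subr_eq0 -ratr_c fmorph_eq0.
  by have := coef_Q j; rewrite Q_eq0 coef0 (big_pred1 j) => [<-|].
apply: rat_poly_root_zeta_eq0.
  rewrite -(prednK (prime_gt0 p_pr)) ltnS; apply/leq_sizeP => k k_ge.
  rewrite coef_Q big1 // => i /eqP val_i.
  have -> : i = r.
    apply: val_inj => /=; rewrite val_r; apply/eqP; rewrite eqn_leq val_i k_ge.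
    by rewrite -ltnS prednK ?prime_gt0 // -val_i ltn_val_Fp.
  by rewrite /c subrr floor0.
rewrite /root rmorph_sum horner_sum /=.
under eq_bigr => i _ do
  rewrite map_polyZ map_polyXn hornerZ hornerXn /= ratr_c mulrBl.
by rewrite sumrB -mulr_sumr [X in _ - _ * X]sum_chi mulr0 subr0 u_chi.
Qed.

End AdditiveCharacter.

Section QuadraticCharacter.

Variable p : nat.
Hypotheses (p_pr : prime p) (p_odd : odd p).

Lemma fermat_Fp (y : 'F_p) : y != 0 -> y ^+ p.-1 = 1.
Proof.
move=> y_neq0; apply: (mulIf y_neq0).
rewrite mul1r -exprSr prednK ?prime_gt0 //.
by rewrite -[in X in _ ^+ X](card_Fp p_pr) expf_card.
Qed.

Lemma Fp_prim_root : {g : 'F_p | (p.-1).-primitive_root g}.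
Proof.
have : has (p.-1).-primitive_root (enum (predC1 (0 : 'F_p))).
  apply: cyclic.has_prim_root; last by rewrite -cardE cardC1 card_Fp.
  - by rewrite -ltnS prednK ?prime_gt1 ?prime_gt0.
  - by apply/allP => y; rewrite mem_enum => /fermat_Fp/unity_rootP.
  - exact: enum_uniq.
by case/hasP/sig2W => g _ g_prim; exists g.
Qed.

Lemma eta00 : eta0 p 0 = 0.
Proof. by rewrite /eta0 eqxx. Qed.

Lemma eta0_sqr (y : 'F_p) : y != 0 -> eta0 p y ^+ 2 = 1.
Proof. by rewrite /eta0 => /negbTE ->; case: ifP; rewrite ?sqrrN expr1n. Qed.

Lemma eta0_int (y : 'F_p) : eta0 p y \is a Num.int.
Proof.
by rewrite /eta0; case: ifP => _; [|case: ifP => _]; rewrite ?rpredN ?rpred1.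
Qed.

Section PrimitiveRoot.

Variable g : 'F_p.
Hypothesis g_prim : (p.-1).-primitive_root g.

Lemma prim_root_Fp_neq0 : g != 0.
Proof.
by rewrite (prim_root_eq0 g_prim) -lt0n -ltnS prednK ?prime_gt1 ?prime_gt0.
Qed.

Let two_dvd_pred : (2 %| p.-1)%N.
Proof. by rewrite -(odd_halfK p_odd) -muln2 dvdn_mull. Qed.

Lemma eta0_prim_rootX k : eta0 p (g ^+ k) = (-1) ^+ k.
Proof.
have g_neq0 := prim_root_Fp_neq0.
rewrite /eta0 expf_eq0 (negbTE g_neq0) andbF -signr_odd.
case: existsP => [[z /eqP z_sqr] | no_sqrt].
  have z_neq0 : z != 0.
    by apply: contraTneq (expf_neq0 k g_neq0) => z0; rewrite -z_sqr z0 expr0n.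
  have [i z_eq] := prim_rootP g_prim (fermat_Fp z_neq0).
  move/eqP: z_sqr; rewrite z_eq -exprM (eq_prim_root_expr g_prim) => /eqP k_mod.
  have := congr1 (modn^~ 2) k_mod.
  rewrite !(modn_dvdm _ two_dvd_pred) modnMl modn2.
  by move/esym/eqP; rewrite eqb0 => /negbTE ->.
case: (boolP (odd k)) => // k_even; case: no_sqrt; exists (g ^+ k./2).
rewrite -exprM -[X in _ == g ^+ X](odd_double_half k) (negbTE k_even).
by rewrite -mul2n mulnC.
Qed.

End PrimitiveRoot.

Lemma eta0M (y z : 'F_p) : eta0 p (y * z) = eta0 p y * eta0 p z.
Proof.
have [g g_prim] := Fp_prim_root.
have [->|y_neq0] := eqVneq y 0; first by rewrite mul0r eta00 mul0r.
have [->|z_neq0] := eqVneq z 0; first by rewrite mulr0 eta00 mulr0.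
have [i ->] := prim_rootP g_prim (fermat_Fp y_neq0).
have [j ->] := prim_rootP g_prim (fermat_Fp z_neq0).
by rewrite -exprD !(eta0_prim_rootX g_prim) exprD.
Qed.

Lemma sum_eta0 : \sum_(y : 'F_p) eta0 p y = 0.
Proof.
have [g g_prim] := Fp_prim_root.
set S := \sum_y _; have : S = - S.
  rewrite {1}/S (reindex_inj (mulfI (prim_root_Fp_neq0 g_prim))) /= -sumrN.
  apply: eq_bigr => y _.
  by rewrite eta0M -[g]expr1 (eta0_prim_rootX g_prim) expr1 mulN1r.
by move/eqP; rewrite -addr_eq0 -mulr2n mulrn_eq0 => /orP[//|/eqP].
Qed.

Lemma eta0N1 : eta0 p (-1) = (-1) ^+ p./2.
Proof.
have [g g_prim] := Fp_prim_root.
suff -> : -1 = g ^+ p./2 by rewrite (eta0_prim_rootX g_prim).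
have half_pred : (p./2 * 2 = p.-1)%N by rewrite muln2 odd_halfK.
have /eqP : (g ^+ p./2) ^+ 2 = 1.
  by rewrite -exprM half_pred (prim_expr_order g_prim).
rewrite sqrf_eq1 => /orP[/eqP g_half|/eqP //]; exfalso.
have half_pos : (0 < p./2)%N by rewrite half_gt0 prime_gt1.
move: g_half => /eqP; rewrite -(prim_order_dvd g_prim) => /(dvdn_leq half_pos).
by rewrite -half_pred -[leqRHS]muln1 leq_pmul2l.
Qed.

End QuadraticCharacter.

Section GaussSum.

Variable p : nat.
Hypotheses (p_pr : prime p) (p_odd : odd p).

Lemma sqrtps_sqr : sqrtps p ^+ 2 = eta0 p (-1) * p%:R.
Proof.
rewrite /sqrtps (eta0N1 p_pr p_odd) -signr_odd.
have -> : (p %% 4 == 1)%N = ~~ odd p./2.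
  have := odd_double_half p; have := odd_double_half p./2; rewrite p_odd.
  by case: (odd p./2) => /= ? ?; apply/eqP; lia.
by case: (odd p./2); rewrite /= ?exprMn sqrtCK ?sqrCi ?mulN1r ?expr0 ?mul1r.
Qed.

Lemma gaussE : gauss p = \sum_(y : 'F_p) eta0 p y * chi p y.
Proof. by rewrite /gauss [RHS](bigD1 0) //= eta00 mul0r add0r. Qed.

Lemma gauss_sqr : gauss p ^+ 2 = eta0 p (-1) * p%:R.
Proof.
pose inner w := \sum_(y : 'F_p) chi p (y * (1 + w)).
transitivity (\sum_(w : 'F_p) eta0 p w * inner w).
  rewrite expr2 {1}gaussE mulr_suml; under [RHS]eq_bigr do rewrite mulr_sumr.
  rewrite [RHS]exchange_big /=; apply: eq_bigr => y _; rewrite gaussE mulr_sumr.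
  have [->|y_neq0] := eqVneq y 0.
    rewrite big1 => [|z _]; last by rewrite eta00 !mul0r.
    by under eq_bigr do rewrite mul0r chi0 mulr1; rewrite sum_eta0.
  rewrite (reindex_inj (mulfI y_neq0)) /=; apply: eq_bigr => w _.
  rewrite (eta0M p_pr p_odd) mulrDr mulr1 (chiD p_pr) mulrACA.
  by rewrite (mulrA (eta0 p y)) -expr2 (eta0_sqr y_neq0) mul1r.
rewrite (bigD1 (-1)) //= big1 ?addr0 => [|w w_neqN1].
  rewrite /inner addrN; under eq_bigr do rewrite mulr0 chi0.
  by rewrite sumr_const card_Fp.
rewrite /inner (@sum_chi_additive _ p_pr _ (fun y => y * (1 + w)) 1) ?mulr0 //.
  by move=> y z; rewrite mulrDl.
by rewrite mul1r addrC -(subr_eq0 w (-1)) opprK in w_neqN1 *.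
Qed.

Lemma gauss_chi (c : 'F_p) :
  gauss p * chi p c = \sum_(j : 'F_p) eta0 p (j - c) * chi p j.
Proof.
rewrite gaussE mulr_suml [RHS](reindex_inj (addIr c)) /=.
by apply: eq_bigr => y _; rewrite addrK (chiD p_pr) mulrA.
Qed.

Lemma gauss_neq0 : gauss p != 0.
Proof.
have : gauss p ^+ 2 != 0.
  rewrite gauss_sqr (eta0N1 p_pr p_odd) mulf_neq0 ?signr_eq0 //.
  by rewrite pnatr_eq0 -lt0n prime_gt0.
by apply: contraNneq => ->; rewrite expr0n.
Qed.

Lemma sqrtps_div_gauss_int : sqrtps p / gauss p \is a Num.int.
Proof.
have /eqP : (sqrtps p / gauss p) ^+ 2 = 1.
  by rewrite expr_div_n sqrtps_sqr -gauss_sqr divff // expf_neq0 ?gauss_neq0.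
by rewrite sqrf_eq1 => /orP[] /eqP ->; rewrite ?rpredN rpred1.
Qed.

Lemma sqrtps_expr_int e : ~~ odd e -> sqrtps p ^+ e \is a Num.int.
Proof.
move=> e_even; rewrite -[e]odd_double_half (negbTE e_even) -mul2n exprM.
rewrite sqrtps_sqr.
by rewrite rpredX ?rpredM ?eta0_int ?natr_int.
Qed.

Lemma sqrtps_expr_div_gauss_int e :
  odd e -> sqrtps p ^+ e / gauss p \is a Num.int.
Proof.
move=> e_odd; rewrite -[e]odd_double_half e_odd exprD expr1 mulrAC.
by rewrite rpredM ?sqrtps_div_gauss_int ?sqrtps_expr_int // odd_double.
Qed.

End GaussSum.

Section PrimeSubfield.

Variables (p : nat) (F : fieldType).
Hypothesis pcharF : p \in [pchar F].

Let p_pr : prime p := pcharf_prime pcharF.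

Lemma emb_natr n : emb p F n%:R = n%:R.
Proof. by rewrite /emb val_Fp_nat // (GRing.natr_mod_pchar pcharF). Qed.

Lemma embD (y z : 'F_p) : emb p F (y + z) = emb p F y + emb p F z.
Proof. by rewrite -[y]natr_Zp -[z]natr_Zp -natrD !emb_natr natrD. Qed.

Lemma embM (y z : 'F_p) : emb p F (y * z) = emb p F y * emb p F z.
Proof. by rewrite -[y]natr_Zp -[z]natr_Zp -natrM !emb_natr natrM. Qed.

Lemma embN (y : 'F_p) : emb p F (- y) = - emb p F y.
Proof. by apply/eqP; rewrite -subr_eq0 opprK -embD addNr. Qed.

Lemma emb_eq0 (y : 'F_p) : (emb p F y == 0) = (y == 0).
Proof.
by rewrite /emb -(dvdn_pcharf pcharF) (dvdn_pcharf (pchar_Fp p_pr)) natr_Zp.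
Qed.

Lemma emb_inj : injective (emb p F).
Proof.
by move=> y z /eqP; rewrite -subr_eq0 -embN -embD emb_eq0 subr_eq0 => /eqP.
Qed.

Lemma emb_expr_pexpn (y : 'F_p) i : emb p F y ^+ (p ^ i) = emb p F y.
Proof.
elim: i => [|i IHi]; first by rewrite expr1.
by rewrite expnSr exprM IHi /emb -pFrobenius_autE pFrobenius_aut_nat.
Qed.

(* X^p - X has at most p roots, and the p elements of the prime field are
   already roots. *)
Lemma pFrobenius_fixed_emb (x : F) : x ^+ p = x -> exists y, x = emb p F y.
Proof.
move=> x_fixed.
suff /existsP[y /eqP x_eq] : [exists y, x == emb p F y] by exists y.
apply: contraT; rewrite negb_exists => /forallP x_new.
pose P : {poly F} := 'X^p - 'X.
have size_P : size P = p.+1.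
  by rewrite size_polyDl size_polyXn // size_polyN size_polyX ltnS prime_gt1.
have P_neq0 : P != 0 by rewrite -size_poly_eq0 size_P.
pose rs := x :: [seq emb p F y | y <- enum 'F_p].
have rs_roots : all (root P) rs.
  apply/allP => z /predU1P[->|/mapP[y _ ->]]; rewrite /root !hornerE.
    by rewrite x_fixed subrr.
  by have := emb_expr_pexpn y 1; rewrite expn1 => ->; rewrite subrr.
have rs_uniq : uniq rs.
  rewrite /= map_inj_uniq ?enum_uniq ?andbT; last exact: emb_inj.
  by apply/mapP => -[y _ x_eq]; have := x_new y; rewrite x_eq eqxx.
have := max_poly_roots P_neq0 rs_roots rs_uniq.
by rewrite /= size_map -cardE card_Fp // size_P ltnn.
Qed.

End PrimeSubfield.

Section Trace.

Variables (p e : nat) (F : finFieldType).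
Hypotheses (p_pr : prime p) (cardF : #|F| = (p ^ e)%N).

Let pcharF : p \in [pchar F] := card_finPcharP cardF p_pr.

Lemma TrE (x : F) : emb p F (Tr p e F x) = \sum_(i < e) x ^+ (p ^ i).
Proof.
set T := \sum_(i < e) _.
have T_fixed : T ^+ p = T.
  rewrite -pFrobenius_autE (rmorph_sum (pFrobenius_aut pcharF)) /=.
  under eq_bigr => i _ do rewrite pFrobenius_autE -exprM -expnSr.
  have sum_shift :
      \sum_(i < e.+1) x ^+ (p ^ i) = x + \sum_(i < e) x ^+ (p ^ i.+1).
    by rewrite big_ord_recl expn0 expr1.
  rewrite big_ord_recr /= -cardF expf_card in sum_shift.
  by apply: (addrI x); rewrite -sum_shift addrC.
rewrite /Tr; case: pickP => [y /eqP //|no_y].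
have [y T_eq] := pFrobenius_fixed_emb pcharF T_fixed.
by have := no_y y; rewrite -/T -T_eq eqxx.
Qed.

Lemma TrD (x y : F) : Tr p e F (x + y) = Tr p e F x + Tr p e F y.
Proof.
apply: (emb_inj pcharF); rewrite embD // !TrE -big_split /=.
apply: eq_bigr => i _; apply: exprDn_pchar.
by rewrite pnatX pnatE ?(pcharf_prime pcharF) // pcharF.
Qed.

Lemma TrZ (u : 'F_p) (x : F) : Tr p e F (emb p F u * x) = u * Tr p e F x.
Proof.
apply: (emb_inj pcharF); rewrite embM // !TrE mulr_sumr.
by apply: eq_bigr => i _; rewrite exprMn emb_expr_pexpn.
Qed.

Lemma Tr0 : Tr p e F 0 = 0.
Proof. by have := TrZ 0 0; rewrite mulr0 mul0r. Qed.

(* The trace is given by a nonzero polynomial of degree p^(e-1) < #|F|. *)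
Lemma Tr_neq0 : (0 < e)%N -> exists x : F, Tr p e F x != 0.
Proof.
move=> e_gt0; suff /existsP[x Tr_x] : [exists x, Tr p e F x != 0] by exists x.
apply: contraT; rewrite negb_exists => /forallP Tr_eq0.
pose P : {poly F} := \sum_(i < e) 'X^(p ^ i).
have coef_P k : P`_k = \sum_(i < e) (k == p ^ i)%N%:R.
  by rewrite coef_sum; apply: eq_bigr => i _; rewrite coefXn.
have e_pred : (e.-1 < e)%N by rewrite prednK.
have P_neq0 : P != 0.
  apply/eqP => /(congr1 (fun Q : {poly F} => Q`_(p ^ e.-1))) /eqP.
  rewrite coef_P coef0 (bigD1 (Ordinal e_pred)) //= eqxx.
  rewrite big1 ?addr0 ?oner_eq0 //.
  move=> i i_neq; rewrite eqn_exp2l ?prime_gt1 // eq_sym.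
  by have /negbTE -> : (i : nat) != e.-1 := i_neq.
have size_P : (size P <= (p ^ e.-1).+1)%N.
  apply/leq_sizeP => k k_gt; rewrite coef_P big1 // => i _.
  case: eqP => // k_eq; move: k_gt; rewrite k_eq ltn_exp2l ?prime_gt1 //.
  by rewrite ltnNge -ltnS prednK // ltn_ord.
have P_roots : all (root P) (enum F).
  apply/allP => x _; have := Tr_eq0 x.
  rewrite negbK -(emb_eq0 pcharF) TrE => /eqP Tr_x.
  by rewrite /root /P horner_sum; under eq_bigr do rewrite hornerXn; rewrite Tr_x.
have := leq_trans (max_poly_roots P_neq0 P_roots (enum_uniq _)) size_P.
rewrite -cardE cardF -(prednK e_gt0) expnS ltnS -[leqRHS]mul1n.
by rewrite leq_pmul2r ?expn_gt0 ?prime_gt0 // leqNgt prime_gt1.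
Qed.

End Trace.

Section FiberCount.

Variable p : nat.
Hypothesis p_pr : prime p.

Let p_neq0 : p%:R != 0 :> algC.
Proof. by rewrite pnatr_eq0 -lt0n prime_gt0. Qed.

Lemma card_fiber_chi (T : finType) (g : T -> 'F_p) (w : 'F_p -> algC) :
  (forall j, w j \is a Num.int) ->
  \sum_x chi p (g x) = \sum_j w j * chi p j ->
  forall j, #|[set x | g x == j]|%:R = (#|T|%:R - \sum_k w k) / p%:R + w j.
Proof.
move=> w_int chi_g j; pose n k : algC := #|[set x | g x == k]|%:R.
have sum_n : \sum_k n k = #|T|%:R.
  rewrite -natr_sum -sum1_card (partition_big g predT) //=.
  congr _%:R; apply: eq_bigr => k _; rewrite sum1_card.
  by apply: eq_card => x; rewrite inE.
have chi_n : \sum_k n k * chi p k = \sum_x chi p (g x).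
  rewrite (partition_big g predT) //=; apply: eq_bigr => k _.
  rewrite (eq_bigr (fun=> chi p k)) => [|x /eqP <- //].
  rewrite sumr_const mulr_natl; congr (_ *+ _).
  by apply: eq_card => x; rewrite inE.
have shift k : n k - w k = n j - w j.
  apply: (chi_int_relation p_pr (u := fun k => n k - w k)) => [i|].
    by rewrite rpredB ?natr_int.
  by under eq_bigr do rewrite mulrBl; rewrite sumrB chi_n chi_g subrr.
have : #|T|%:R = p%:R * (n j - w j) + \sum_k w k.
  rewrite -sum_n (eq_bigr (fun k => (n j - w j) + w k)) => [|k _]; last first.
    by rewrite -(shift k) subrK.
  by rewrite big_split sumr_const card_Fp // mulr_natl.
by move=> ->; rewrite addrK mulrC mulKf // subrK.
Qed.

Lemma card_Tr_fiber e (F : finFieldType) (b : F) (u : 'F_p) :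
  #|F| = (p ^ e)%N -> (0 < e)%N -> b != 0 ->
  #|[set x | Tr p e F (b * x) == u]| = (p ^ e.-1)%N.
Proof.
move=> cardF e_gt0 b_neq0; have [x Tr_x] := Tr_neq0 p_pr cardF e_gt0.
have chi_Tr : \sum_y chi p (Tr p e F (b * y)) = \sum_(k : 'F_p) 0 * chi p k.
  rewrite [RHS]big1 => [|k _]; last by rewrite mul0r.
  apply: (@sum_chi_additive _ p_pr _ _ (x / b)) => [y z|].
    by rewrite mulrDr TrD.
  by rewrite mulrC divfK.
apply/eqP; rewrite -(eqr_nat algC) (card_fiber_chi (fun=> rpred0 _) chi_Tr).
rewrite sumr_const mul0rn subr0 addr0 cardF -[e in (p ^ e)%N](prednK e_gt0).
by rewrite expnS natrM mulrC mulKf.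
Qed.

End FiberCount.

Section BentFiber.

Variables (p e : nat) (T : finType) (g : T -> 'F_p) (eps : int) (c : 'F_p).
Hypotheses (p_pr : prime p) (p_odd : odd p).
Hypotheses (cardT : #|T| = (p ^ e)%N) (e_gt0 : (0 < e)%N).
Hypothesis chi_g : \sum_x chi p (g x) = eps%:~R * sqrtps p ^+ e * chi p c.

Let p_neq0 : p%:R != 0 :> algC.
Proof. by rewrite pnatr_eq0 -lt0n prime_gt0. Qed.

Let cardT_alg : #|T|%:R = p%:R * (p ^ e.-1)%:R :> algC.
Proof. by rewrite cardT -natrM -expnS prednK. Qed.

Lemma card_bent_fiber_even j : ~~ odd e ->
  #|[set x | g x == j]|%:R
    = (p ^ e.-1)%:R + eps%:~R * sqrtps p ^+ e * ((j == c)%:R - p%:R^-1).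
Proof.
move=> e_even; set K := eps%:~R * sqrtps p ^+ e.
have sum_pred_c (h : 'F_p -> algC) : \sum_k h k * (k == c)%:R = h c.
  rewrite (bigD1 c) //= eqxx mulr1 big1 ?addr0 // => k /negbTE ->.
  by rewrite mulr0.
have w_int k : K * (k == c)%:R \is a Num.int.
  by rewrite rpredM ?natr_int ?rpredM ?intr_int ?sqrtps_expr_int.
have chi_w : \sum_x chi p (g x) = \sum_k K * (k == c)%:R * chi p k.
  by rewrite chi_g; under eq_bigr do rewrite mulrAC; rewrite sum_pred_c.
rewrite (card_fiber_chi p_pr w_int chi_w) (sum_pred_c (fun=> K)) cardT_alg.
by field.
Qed.

Lemma card_bent_fiber_odd j : odd e ->
  #|[set x | g x == j]|%:R
    = (p ^ e.-1)%:R + eps%:~R * sqrtps p ^+ e * gauss p * eta0 p (c - j) / p%:R.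
Proof.
move=> e_odd; have gauss_neq0 := gauss_neq0 p_pr p_odd.
set K := eps%:~R * sqrtps p ^+ e / gauss p.
have eta0_shift : \sum_(k : 'F_p) eta0 p (k - c) = 0.
  rewrite (reindex_inj (addIr c)) /=; under eq_bigr do rewrite addrK.
  exact: sum_eta0.
have w_int k : K * eta0 p (k - c) \is a Num.int.
  rewrite rpredM ?eta0_int // /K -mulrA.
  by rewrite rpredM ?intr_int ?sqrtps_expr_div_gauss_int.
have chi_w : \sum_x chi p (g x) = \sum_k K * eta0 p (k - c) * chi p k.
  rewrite chi_g; under eq_bigr do rewrite -mulrA.
  by rewrite -mulr_sumr -(gauss_chi p_pr) mulrA divfK.
rewrite (card_fiber_chi p_pr w_int chi_w) -mulr_sumr eta0_shift mulr0 subr0.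
have eta0N1_neq0 : eta0 p (-1) != 0 by rewrite (eta0N1 p_pr p_odd) signr_eq0.
have gauss_inv : (gauss p)^-1 = gauss p / (eta0 p (-1) * p%:R).
  by rewrite -(gauss_sqr p_pr p_odd) expr2 invfM mulVKf.
have -> : j - c = -1 * (c - j) by rewrite mulN1r opprB.
rewrite cardT_alg (eta0M p_pr p_odd) /K gauss_inv.
by field; rewrite p_neq0 eta0N1_neq0.
Qed.

End BentFiber.

Lemma Ncount_fiber p e (F : finFieldType) (f : F -> 'F_p) (a s : 'F_p) (b : F) :
  prime p -> #|F| = (p ^ e)%N -> a != 0 ->
  Ncount p e F f a s b
    = #|[set x | f x - Tr p e F (- b / emb p F a * x) == a^-1 * s]|.
Proof.
move=> p_pr cardF a_neq0; have pcharF := card_finPcharP cardF p_pr.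
apply: eq_card => x; rewrite !inE.
have -> : b * x = emb p F (- a) * (- b / emb p F a * x).
  by rewrite (embN pcharF); field; rewrite (emb_eq0 pcharF).
rewrite (TrZ p_pr cardF) mulNr -mulrBr.
exact: (can2_eq (mulKf a_neq0) (mulVKf a_neq0)).
Qed.

Theorem lemma4p1 (p e : nat) (F : finFieldType) (f fstar : F -> 'F_p)
    (eps : int) (s a : 'F_p) (b : F) :
  prime p -> odd p -> (0 < e)%N -> #|F| = (p ^ e)%N ->
  inRF p e F f -> wrbent p e F f eps fstar -> s != 0 ->
  let N : algC := (Ncount p e F f a s b)%:R in
  let q : algC := (p ^ e.-1)%:R in
  let c := fstar (- b / emb p F a) in
  let t := a^-1 * s in
  (a = 0 -> b = 0 -> N = 0) /\
  (a = 0 -> b != 0 -> N = q) /\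
  (~~ odd e -> a != 0 -> c = t ->
     N = q + eps%:~R * (p%:R - 1) * sqrtps p ^+ e / p%:R) /\
  (~~ odd e -> a != 0 -> c != t ->
     N = q - eps%:~R * sqrtps p ^+ e / p%:R) /\
  (odd e -> a != 0 -> c = t -> N = q) /\
  (odd e -> a != 0 -> c != t -> eta0 p (c - t) = 1 ->
     N = q + eps%:~R * sqrtps p ^+ e * gauss p / p%:R) /\
  (odd e -> a != 0 -> c != t -> eta0 p (c - t) = -1 ->
     N = q - eps%:~R * sqrtps p ^+ e * gauss p / p%:R).
Proof.
move=> p_pr p_odd e_gt0 cardF _ [_ bent] s_neq0 N q c t.
have [a0|a_neq0] := eqVneq a 0.
  have N_Tr : N = #|[set x | Tr p e F (b * x) == s]|%:R.
    rewrite /N /Ncount a0; congr _%:R.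
    by apply: eq_card => x; rewrite !inE mul0r add0r.
  split=> [_ b0|].
    rewrite N_Tr b0 (_ : [set x | _] = set0) ?cards0 //; apply/setP => x.
    by rewrite !inE mul0r (Tr0 p_pr cardF) eq_sym (negbTE s_neq0).
  split=> [_ b_neq0|].
    by rewrite N_Tr (card_Tr_fiber p_pr _ cardF e_gt0 b_neq0).
  by do !split.
have p_neq0 : p%:R != 0 :> algC by rewrite pnatr_eq0 -lt0n prime_gt0.
have walsh_beta := bent (- b / emb p F a).
rewrite /N (Ncount_fiber f s b p_pr cardF a_neq0).
do 2 (split; first by move=> a0; rewrite a0 eqxx in a_neq0).
have [e_odd|e_even] := boolP (odd e).
  rewrite (card_bent_fiber_odd p_pr p_odd cardF e_gt0 walsh_beta _ e_odd).
  rewrite -/c -/t.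
  do 2 (split; first by []).
  split=> [_ _ ->|]; first by rewrite subrr eta00 mulr0 mul0r addr0.
  by split=> _ _ _ ->; rewrite ?mulr1 // mulrN1 mulNr.
rewrite (card_bent_fiber_even p_pr p_odd cardF e_gt0 walsh_beta _ e_even).
rewrite -/c -/t.
split=> [_ _ ->|]; first by rewrite eqxx /=; field.
split=> [_ _ c_neq_t|]; first by rewrite eq_sym (negbTE c_neq_t) sub0r mulrN.
by do !split.
Qed.
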